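(* Let $\mathcal{U}_i$ be a finite set, $D_i$ a probability distribution on $\mathcal{U}_i$, and $\bm{z}_i\in[0,1]^{\mathcal{U}_i}$ with $z_e\le D_i(e)$ for all $e\in\mathcal{U}_i$. Let $R\sim\bm{z}_i$ denote the random subset of $\mathcal{U}_i$ containing each $e$ independently with probability $z_e$. Consider the random set $T_i\subseteq\mathcal{U}_i$ produced as follows: draw $X_i\sim D_i$ with realization $e$; with probability $\Pr_{R\sim\bm{z}_i}[R=\{e\}]/D_i(e)$ set $T_i=\{e\}$; otherwise set $T_i$ to an (independent) random set drawn from $\bm{z}_i$ conditioned on $|R|\ne1$. Then for every $S\subseteq\mathcal{U}_i$, \[\Pr[T_i=S]=\Pr_{R\sim\bm{z}_i}[R=S].\]
   Context: Note $\Pr_{R\sim\bm{z}_i}[R=S]=\prod_{e\in S}z_e\prod_{e\in\mathcal{U}_i\setminus S}(1-z_e)$; the hypothesis $z_e\le D_i(e)$ ensures the probability $\Pr[R=\{e\}]/D_i(e)$ is at most $1$ (for realized $e$, $D_i(e)>0$). The conditioned draw is only needed in the ''otherwise'' branch. *)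

From mathcomp Require Import all_boot all_order all_algebra.
Set Implicit Arguments. Unset Strict Implicit. Unset Printing Implicit Defensive.
Import Order.TTheory GRing.Theory Num.Theory.
Local Open Scope ring_scope.

Section Defs.
Variables (R : realFieldType) (U : finType).

(* Pr_{R ~ z}[R = S]: each e included independently with probability z e. *)
Definition prZ (z : U -> R) (S : {set U}) : R :=
  \prod_(e in S) z e * \prod_(e in ~: S) (1 - z e).

Definition prZ_not_single (z : U -> R) : R :=
  \sum_(S : {set U} | #|S| != 1%N) prZ z S.

Definition prZ_cond (z : U -> R) (S : {set U}) : R :=
  (if #|S| != 1%N then prZ z S else 0) / prZ_not_single z.

(* Law of T_i: draw X ~ D with realization e; with probability
   q_e = Pr[R = {e}] / D e set T = {e}; otherwise (prob. 1 - q_e) draw T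
   independently from z conditioned on |R| <> 1.  By total probability,
   Pr[T = S] = sum_e D e * (q_e [S = {e}] + (1 - q_e) Pr[R = S | |R| <> 1]). *)
Definition prT (D z : U -> R) (S : {set U}) : R :=
  \sum_(e : U) D e *
    (let q := prZ z [set e] / D e in
     q * (S == [set e])%:R + (1 - q) * prZ_cond z S).

End Defs.

(** Split the law of [T] according to whether the coin lands on the singleton
    branch.  Since [D e * (Pr[R = {e}] / D e) = Pr[R = {e}]], the singleton
    branch contributes exactly [Pr[R = S]] when [|S| = 1], and the other branch
    is taken with total probability [1 - sum_e Pr[R = {e}] = Pr[|R| <> 1]],
    which cancels the normalisation of the conditioned draw. *)
From mathcomp Require Import all_boot all_order all_algebra.
Set Implicit Arguments. Unset Strict Implicit. Unset Printing Implicit Defensive.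
Import Order.TTheory GRing.Theory Num.Theory.
Local Open Scope ring_scope.

Section SingletonSums.
Variables (R : pzSemiRingType) (U : finType).

Lemma sum_set1_indicator (F : {set U} -> R) (S : {set U}) :
  \sum_(e : U) F [set e] * (S == [set e])%:R = if #|S| == 1%N then F S else 0.
Proof.
case: (@cards1P _ S) => [[x ->]|not_set1].
  rewrite (bigD1 x) //= eqxx mulr1 big1 ?addr0 // => e /negbTE neq_ex.
  by rewrite eq_sym (inj_eq set1_inj) neq_ex mulr0.
apply: big1 => e _; case: eqP => [S_e|]; last by rewrite mulr0.
by case: not_set1; exists e.
Qed.

Lemma sum_card1 (F : {set U} -> R) :
  \sum_(S : {set U} | #|S| == 1%N) F S = \sum_(e : U) F [set e].
Proof.
rewrite big_mkcond /=.
under eq_bigr => S _ do rewrite -sum_set1_indicator.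
rewrite exchange_big /=; apply: eq_bigr => e _.
rewrite (bigD1 [set e]) //= eqxx mulr1 big1 ?addr0 // => S /negbTE ->.
by rewrite mulr0.
Qed.

End SingletonSums.

Section ProductMeasure.
Variables (R : realFieldType) (U : finType) (z : U -> R).

Lemma sum_prZ : \sum_(S : {set U}) prZ z S = 1.
Proof.
have -> : 1 = \prod_(e : U) \sum_(b : bool) (if b then z e else 1 - z e).
  by symmetry; rewrite big1 // => e _; rewrite big_bool /= addrC subrK.
rewrite bigA_distr_bigA.
pose set_of (f : {ffun U -> bool}) : {set U} := [set x | f x].
have set_of_bij : bijective set_of.
  exists (fun S : {set U} => [ffun x => x \in S]) => [f|S].
    by apply/ffunP => x; rewrite ffunE inE.
  by apply/setP => x; rewrite inE ffunE.
rewrite (reindex set_of) /=; last exact: onW_bij.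
apply: eq_bigr => f _; rewrite /prZ [RHS](bigID (fun e => f e)) /=.
congr (_ * _).
  by apply: eq_big => e; rewrite ?inE // => ->.
by apply: eq_big => e; rewrite ?inE // => /negbTE ->.
Qed.

Lemma prZ_not_singleE : prZ_not_single z = 1 - \sum_(e : U) prZ z [set e].
Proof.
rewrite -sum_prZ (bigID (fun S : {set U} => #|S| == 1%N)) /= sum_card1.
by rewrite /prZ_not_single addrC addrK.
Qed.

Lemma prZ_set1_eq0 (e : U) : z e = 0 -> prZ z [set e] = 0.
Proof. by move=> ze0; rewrite /prZ big_set1 ze0 !mul0r. Qed.

Hypotheses (z_ge0 : forall e, 0 <= z e) (z_le1 : forall e, z e <= 1).

Lemma prZ_ge0 (S : {set U}) : 0 <= prZ z S.
Proof. by rewrite mulr_ge0 // prodr_ge0 // => e _; rewrite ?subr_ge0. Qed.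

Lemma prZ_not_single_mul_cond (S : {set U}) :
  prZ_not_single z * prZ_cond z S = if #|S| != 1%N then prZ z S else 0.
Proof.
have [N0|N_neq0] := eqVneq (prZ_not_single z) 0; last by rewrite mulrCA divff ?mulr1.
rewrite N0 mul0r; case: ifPn => // S_not1; apply/esym/eqP.
move/eqP: N0; rewrite psumr_eq0 => [/allP/(_ S)|T _]; last exact: prZ_ge0.
by rewrite mem_index_enum S_not1 => /(_ isT).
Qed.

End ProductMeasure.

Lemma prTE (R : realFieldType) (U : finType) (D z : U -> R) (S : {set U}) :
  \sum_(e : U) D e = 1 ->
  (forall e, D e = 0 -> z e = 0) ->
  prT D z S = (if #|S| == 1%N then prZ z S else 0)
              + (1 - \sum_(e : U) prZ z [set e]) * prZ_cond z S.
Proof.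
move=> D_sum1 zD0.
have D_mul_q e : D e * (prZ z [set e] / D e) = prZ z [set e].
  have [De0|De_neq0] := eqVneq (D e) 0; last by rewrite mulrCA divff ?mulr1.
  by rewrite De0 mul0r prZ_set1_eq0 ?zD0.
rewrite /prT.
under eq_bigr => e _ do rewrite mulrDr mulrA D_mul_q mulrA mulrBr mulr1 D_mul_q.
by rewrite big_split /= sum_set1_indicator -mulr_suml sumrB D_sum1.
Qed.

Theorem lemma5 (R : realFieldType) (U : finType) (D z : U -> R)
  (hD0 : forall e, 0 <= D e) (hD1 : \sum_(e : U) D e = 1)
  (hz0 : forall e, 0 <= z e) (hz1 : forall e, z e <= 1)
  (hzD : forall e, z e <= D e) :
  forall S : {set U}, prT D z S = prZ z S.
Proof.
move=> S.
have zD0 e : D e = 0 -> z e = 0.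
  by move=> De0; apply/le_anti; rewrite hz0 -De0 hzD.
rewrite prTE // -prZ_not_singleE prZ_not_single_mul_cond //.
by case: ifP; rewrite ?addr0 ?add0r.
Qed.
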